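(* For $x\in(0,27/4)$ define \begin{align*} V(x)=&\frac{\sqrt{3}}{2^{10/3}\pi x^{2/3}}\left(3\sqrt{1-4x/27}-1\right)\left(1+\sqrt{1-4x/27}\right)^{1/3}\\ &+\frac{1}{2^{8/3}\pi x^{1/3}\sqrt{3}}\left(3\sqrt{1-4x/27}+1\right)\left(1+\sqrt{1-4x/27}\right)^{-1/3}. \end{align*} Then for every integer $n\ge0$, \[ \int_0^{27/4}x^nV(x)\,dx=\binom{3n}{n}\frac{1}{n+1}. \] Consequently $V$ is the density of the unique probability measure $\mu_0$ on $\mathbb{R}$ whose moments are $\binom{3n}{n}\frac{1}{n+1}$, $n\ge0$. *)

From Stdlib Require Import Reals.
Open Scope R_scope.

(* The function V on (0, 27/4); real powers via Rpower (arguments are > 0 there). *)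
Definition V (x : R) : R :=
  let s := sqrt (1 - 4 * x / 27) in
  sqrt 3 / (Rpower 2 (10/3) * PI * Rpower x (2/3))
    * (3 * s - 1) * Rpower (1 + s) (1/3)
  + 1 / (Rpower 2 (8/3) * PI * Rpower x (1/3) * sqrt 3)
    * (3 * s + 1) * Rpower (1 + s) (-(1/3)).

Definition improper_int_0 (f : R -> R) (b l : R) : Prop :=
  (forall t, 0 < t <= b -> inhabited (Riemann_integrable f t b)) /\
  (forall eps, eps > 0 -> exists delta, delta > 0 /\
     forall t (pr : Riemann_integrable f t b),
       0 < t < delta -> Rabs (RiemannInt pr - l) < eps).

(* Substitute x = 27 t^3 / (1 + t^3)^2 with t in (0, 1].  Then
   sqrt (1 - 4x/27) = (1 - t^3)/(1 + t^3), every cube root in V becomes rational, and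
   V x = sqrt 3/(36 PI) (1 - t)(1 + t)^3/t^2, so x^n V(x) dx pulls back to a bounded
   rational integrand g_n(t) dt on [0, 1].  Its integral m_n is computed by induction:
   m_0 = 1 through an arctan primitive, and an explicit H_n with H_n(0) = H_n(1) = 0 and
   H_n' = g_n (2(2n+1)(n+2) x - 3(3n+1)(3n+2)) yields
   2(2n+1)(n+2) m_(n+1) = 3(3n+1)(3n+2) m_n, the recurrence of C(3n, n)/(n+1).
   Near x = 0 the parameter satisfies t^3 <= 4x/27, so the bound on g_n controls the
   improper integral. *)

From Stdlib Require Import Reals Lra Lia.
From Coquelicot Require Import Coquelicot.
Open Scope R_scope.

Ltac neq0 :=
  repeat match goal with
         | |- _ * _ <> 0 => apply Rmult_integral_contrapositive_currified
         | |- _ ^ _ <> 0 => apply pow_nonzero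
         end;
  first [ lra | apply Rgt_not_eq; unfold Rgt; nra | apply Rlt_not_eq; nra ].
Ltac neq0s := repeat split; try match goal with |- _ <> 0 => neq0 end.

Lemma Rpower_pos a r : 0 < Rpower a r.
Proof. apply exp_pos. Qed.

Lemma Rpower_cube y k r : 0 < y -> r * 3 = INR k -> Rpower (y ^ 3) r = y ^ k.
Proof.
  intros Hy Hr. rewrite <- (Rpower_pow 3 y Hy), Rpower_mult.
  replace (INR 3 * r) with (INR k) by (simpl; lra).
  now apply Rpower_pow.
Qed.

Lemma Rpower_third_cube r : 0 < r -> Rpower r (1/3) ^ 3 = r.
Proof.
  intros Hr. rewrite <- Rpower_pow, Rpower_mult by apply Rpower_pos.
  replace (1/3 * INR 3) with 1 by (simpl; field). now apply Rpower_1.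
Qed.

Lemma continuous_Rmult (f g : R -> R) x :
  continuous f x -> continuous g x -> continuous (fun y => f y * g y) x.
Proof. intros; now apply (continuous_mult f g). Qed.

Lemma continuous_Rplus (f g : R -> R) x :
  continuous f x -> continuous g x -> continuous (fun y => f y + g y) x.
Proof. intros; now apply (continuous_plus f g). Qed.

Lemma continuous_Rminus (f g : R -> R) x :
  continuous f x -> continuous g x -> continuous (fun y => f y - g y) x.
Proof. intros; now apply (continuous_minus f g). Qed.

Lemma continuous_Rdiv (f g : R -> R) x :
  continuous f x -> continuous g x -> g x <> 0 -> continuous (fun y => f y / g y) x.
Proof. intros; apply continuous_Rmult; auto. now apply continuous_Rinv_comp. Qed.

Lemma continuous_Rpow (f : R -> R) n x : continuous f x -> continuous (fun y => f y ^ n) x.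
Proof.
  intros Hf. induction n as [|n IH]; [apply continuous_const |].
  now apply continuous_Rmult.
Qed.

Lemma continuous_Rpower (f : R -> R) r x :
  continuous f x -> 0 < f x -> continuous (fun y => Rpower (f y) r) x.
Proof.
  intros. apply continuous_exp_comp, continuous_Rmult; [apply continuous_const |].
  apply (continuous_comp f ln); auto. now apply continuous_ln.
Qed.

Ltac continuity_R :=
  repeat match goal with
  | |- continuous (fun y => @?f y * @?g y) _ => apply (continuous_Rmult f g)
  | |- continuous (fun y => @?f y / @?g y) _ => apply (continuous_Rdiv f g)
  | |- continuous (fun y => @?f y + @?g y) _ => apply (continuous_Rplus f g)
  | |- continuous (fun y => @?f y - @?g y) _ => apply (continuous_Rminus f g)
  | |- continuous (fun y => @?f y ^ ?n) _ => apply (continuous_Rpow f n)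
  | |- continuous (fun y => sqrt (@?f y)) _ => apply (continuous_sqrt_comp f)
  | |- continuous (fun y => Rpower (@?f y) ?r) _ => apply (continuous_Rpower f r)
  | |- continuous (fun y => y) _ => apply continuous_id
  | |- continuous (fun y => ?c) _ => apply continuous_const
  end; cbv beta.

Ltac pos :=
  match goal with
  | |- 0 < _ * _ => apply Rmult_lt_0_compat; pos
  | |- 0 < Rpower _ _ => apply Rpower_pos
  | |- 0 < PI => apply PI_RGT_0
  | |- 0 < sqrt _ => apply sqrt_lt_R0; lra
  | _ => lra
  end.

Definition xpar (t : R) : R := 27 * t^3 / (1 + t^3)^2.
Definition dxpar (t : R) : R := 81 * t^2 * (1 - t^3) / (1 + t^3)^3.
Definition cV : R := sqrt 3 / (36 * PI).
Definition Vpar (t : R) : R := cV * (1 - t) * (1 + t)^3 / t^2.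

Lemma one_plus_cube_pos t : 0 <= t -> 0 < 1 + t^3.
Proof. intros. assert (0 <= t^3) by (apply pow_le; lra). lra. Qed.

Lemma sqrt_one_minus_xpar t : 0 <= t <= 1 ->
  sqrt (1 - 4 * xpar t / 27) = (1 - t^3) / (1 + t^3).
Proof.
  intros Ht. pose proof (one_plus_cube_pos t ltac:(lra)).
  assert (t^3 <= 1) by (replace 1 with (1^3) by ring; apply pow_incr; lra).
  replace (1 - 4 * xpar t / 27) with (((1 - t^3) / (1 + t^3))^2)
    by (unfold xpar; field; neq0s).
  apply sqrt_pow2, Rdiv_le_0_compat; lra.
Qed.

(* Every radical of [V (xpar t)] is a monomial in the cube roots [q] of 2 and [u] of [1 + t^3]. *)
Lemma V_xpar t : 0 < t <= 1 -> V (xpar t) = Vpar t.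
Proof.
  intros [Ht0 Ht1].
  assert (Ht3 : 0 < t^3) by (apply pow_lt; lra).
  set (u := Rpower (1 + t^3) (1/3)).
  set (q := Rpower 2 (1/3)).
  assert (Hu : 0 < u) by apply Rpower_pos.
  assert (Hq : 0 < q) by apply Rpower_pos.
  assert (Hu3 : u^3 = 1 + t^3) by (apply Rpower_third_cube; lra).
  assert (Hq3 : q^3 = 2) by (apply Rpower_third_cube; lra).
  assert (Hx : xpar t = (3 * t / u^2)^3) by (unfold xpar; rewrite <- Hu3; field; neq0s).
  assert (Hxpos : 0 < 3 * t / u^2) by (apply Rdiv_lt_0_compat; [lra | apply pow_lt; lra]).
  assert (Hs : 1 + (1 - t^3) / (1 + t^3) = (q / u)^3).
  { replace ((q / u)^3) with (q^3 / u^3) by (field; neq0s). rewrite Hq3, Hu3. field; neq0s. }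
  assert (E1 : Rpower 2 (10/3) = 8 * q).
  { rewrite <- Hq3, (Rpower_cube q 10) by (simpl; lra).
    replace (q^10) with ((q^3)^3 * q) by ring. rewrite Hq3. ring. }
  assert (E2 : Rpower 2 (8/3) = 4 * q^2).
  { rewrite <- Hq3, (Rpower_cube q 8) by (simpl; lra).
    replace (q^8) with ((q^3)^2 * q^2) by ring. rewrite Hq3. ring. }
  assert (E3 : Rpower (xpar t) (2/3) = (3 * t / u^2)^2)
    by (rewrite Hx; apply Rpower_cube; [exact Hxpos | simpl; lra]).
  assert (E4 : Rpower (xpar t) (1/3) = 3 * t / u^2)
    by (rewrite Hx, (Rpower_cube _ 1); [apply pow_1 | lra | simpl; lra]).
  assert (E5 : Rpower (1 + (1 - t^3) / (1 + t^3)) (1/3) = q / u)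
    by (rewrite Hs, (Rpower_cube _ 1);
        [apply pow_1 | apply Rdiv_lt_0_compat; lra | simpl; lra]).
  assert (E6 : Rpower (1 + (1 - t^3) / (1 + t^3)) (-(1/3)) = u / q).
  { rewrite Rpower_Ropp, E5. field; neq0s. }
  unfold V. cbv zeta. rewrite sqrt_one_minus_xpar, E1, E2, E3, E4, E5, E6 by lra.
  assert (PI > 0) by apply PI_RGT_0.
  assert (sqrt 3 > 0) by (apply sqrt_lt_R0; lra).
  transitivity (sqrt 3 * u^3 * (3 * ((1 - t^3) / (1 + t^3)) - 1) / (72 * PI * t^2)
     + u^3 * (3 * ((1 - t^3) / (1 + t^3)) + 1) / (24 * PI * t * sqrt 3)).
  { replace (q^2) with (q^3 / q) by (field; neq0s). rewrite Hq3. field; neq0s. }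
  rewrite Hu3. unfold Vpar, cV.
  apply Rmult_eq_reg_r with (sqrt 3); [| lra].
  field_simplify; neq0s.
  rewrite pow2_sqrt by lra. field; neq0s.
Qed.

Lemma continuous_pow_mul_V n x : 0 < x -> continuous (fun y => y ^ n * V y) x.
Proof.
  intros Hx. unfold V. cbv zeta. continuity_R; try lra.
  all: try (pose proof (sqrt_pos (1 - 4 * x / 27)); lra).
  all: apply Rgt_not_eq; unfold Rgt; pos.
Qed.

Lemma sqrt3_pos : 0 < sqrt 3.
Proof. apply sqrt_lt_R0; lra. Qed.

Lemma cV_pos : 0 < cV.
Proof. apply Rdiv_lt_0_compat; [apply sqrt3_pos | pose proof PI_RGT_0; lra]. Qed.

Lemma xpar_pos t : 0 < t -> 0 < xpar t.
Proof.
  intros Ht. apply Rdiv_lt_0_compat.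
  - assert (0 < t^3) by (apply pow_lt; lra). lra.
  - apply pow_lt, one_plus_cube_pos; lra.
Qed.

Lemma xpar_le t : 0 <= t -> xpar t <= 27/4.
Proof.
  intros Ht. pose proof (one_plus_cube_pos t Ht). unfold xpar.
  apply Rle_div_l; [apply Rlt_gt, pow_lt; lra |].
  pose proof (pow2_ge_0 (1 - t^3)). nra.
Qed.

Lemma xpar_ge t : 0 <= t <= 1 -> 27/4 * t^3 <= xpar t.
Proof.
  intros Ht. pose proof (one_plus_cube_pos t ltac:(lra)). unfold xpar.
  assert (0 <= t^3 <= 1) by (split; [apply pow_le | replace 1 with (1^3) by ring; apply pow_incr]; lra).
  apply (Rle_div_r (27/4 * t^3)); [apply Rlt_gt, pow_lt; lra | nra].
Qed.

Lemma xpar_1 : xpar 1 = 27/4.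
Proof. unfold xpar. field. Qed.

Lemma xpar_surj x : 0 < x <= 27/4 -> exists t, 0 < t <= 1 /\ xpar t = x.
Proof.
  intros Hx.
  set (s := sqrt (1 - 4 * x / 27)).
  assert (Hs0 : 0 <= s) by apply sqrt_pos.
  assert (Hs2 : s^2 = 1 - 4 * x / 27) by (apply pow2_sqrt; lra).
  assert (Hs1 : s < 1) by nra.
  set (r := (1 - s) / (1 + s)).
  assert (Hr : 0 < r) by (apply Rdiv_lt_0_compat; lra).
  assert (Hr1 : r <= 1) by (apply Rle_div_l; lra).
  assert (Ht3 : Rpower r (1/3) ^ 3 = r) by now apply Rpower_third_cube.
  exists (Rpower r (1/3)). split; [split|].
  - apply Rpower_pos.
  - destruct (Rle_lt_dec (Rpower r (1/3)) 1) as [|Hlt]; auto.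
    pose proof (Rlt_pow_R1 _ 3 Hlt ltac:(lia)). lra.
  - unfold xpar. rewrite Ht3. unfold r. field_simplify; lra.
Qed.

Lemma is_derive_xpar t : 0 <= t -> is_derive xpar t (dxpar t).
Proof.
  intros Ht. pose proof (one_plus_cube_pos t Ht). unfold xpar, dxpar.
  auto_derive; [neq0s | field; neq0s].
Qed.

Lemma continuous_dxpar t : 0 <= t -> continuous dxpar t.
Proof. intros Ht. pose proof (one_plus_cube_pos t Ht). unfold dxpar. continuity_R. neq0. Qed.

Lemma V_nonneg x : 0 < x < 27/4 -> 0 <= V x.
Proof.
  intros Hx. destruct (xpar_surj x) as [t [Ht <-]]; [lra |].
  rewrite V_xpar by lra. pose proof cV_pos. unfold Vpar.
  apply Rmult_le_pos; [apply Rmult_le_pos; [apply Rmult_le_pos |] |]; try lra.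
  - apply pow_le; lra.
  - apply Rlt_le, Rinv_0_lt_compat, pow_lt; lra.
Qed.

Definition integrand (n : nat) (t : R) : R :=
  81 * cV * xpar t ^ n * ((1 - t)^2 * (1 + t + t^2)) / (1 - t + t^2)^3.

Lemma quadratic_pos t : 0 < 1 - t + t^2.
Proof. nra. Qed.

Lemma integrand_xpar n t : 0 < t -> integrand n t = xpar t ^ n * Vpar t * dxpar t.
Proof.
  intros Ht. pose proof (one_plus_cube_pos t ltac:(lra)). pose proof (quadratic_pos t).
  unfold integrand, Vpar, dxpar. field; neq0s.
Qed.

Lemma continuous_integrand n t : 0 <= t -> continuous (integrand n) t.
Proof.
  intros Ht. pose proof (one_plus_cube_pos t Ht). pose proof (quadratic_pos t).
  unfold integrand, xpar, cV. continuity_R; try neq0.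
  apply Rgt_not_eq; unfold Rgt; pos.
Qed.

Lemma ex_RInt_integrand n a b : 0 <= a -> 0 <= b -> ex_RInt (integrand n) a b.
Proof.
  intros Ha Hb. apply (ex_RInt_continuous (V := R_CompleteNormedModule)).
  intros t Ht. apply continuous_integrand. pose proof (Rmin_glb a b 0 Ha Hb). lra.
Qed.

Lemma is_RInt_pow_mul_V n a : 0 < a <= 1 ->
  is_RInt (fun x => x ^ n * V x) (xpar a) (27/4) (RInt (integrand n) a 1).
Proof.
  intros Ha.
  assert (Hc : forall t, Rmin a 1 <= t <= Rmax a 1 ->
            continuous (fun x => x ^ n * V x) (xpar t)).
  { intros t Ht. rewrite Rmin_left, Rmax_right in Ht by lra.
    apply continuous_pow_mul_V, xpar_pos. lra. }
  assert (Hd : forall t, Rmin a 1 <= t <= Rmax a 1 ->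
            is_derive xpar t (dxpar t) /\ continuous dxpar t).
  { intros t Ht. rewrite Rmin_left, Rmax_right in Ht by lra.
    split; [apply is_derive_xpar | apply continuous_dxpar]; lra. }
  pose proof (is_RInt_comp _ _ _ a 1 Hc Hd) as Hsubst. rewrite xpar_1 in Hsubst.
  replace (RInt (integrand n) a 1) with (RInt (fun x => x ^ n * V x) (xpar a) (27/4)).
  - apply (RInt_correct (V := R_CompleteNormedModule)).
    apply (ex_RInt_continuous (V := R_CompleteNormedModule)).
    intros x Hx. rewrite Rmin_left, Rmax_right in Hx by (apply xpar_le; lra).
    apply continuous_pow_mul_V. pose proof (xpar_pos a ltac:(lra)). lra.
  - symmetry. apply is_RInt_unique.
    eapply is_RInt_ext; [| exact Hsubst].
    intros t Ht. rewrite Rmin_left, Rmax_right in Ht by lra.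
    rewrite integrand_xpar, V_xpar by lra. unfold scal; simpl; unfold mult; simpl. ring.
Qed.

Definition integrand_sup (n : nat) : R := 648 * cV * (27/4)^n.

Lemma integrand_bound n t : 0 <= t <= 1 -> Rabs (integrand n t) <= integrand_sup n.
Proof.
  intros Ht. pose proof cV_pos. pose proof (quadratic_pos t).
  assert (Hx : 0 <= xpar t ^ n <= (27/4)^n).
  { assert (0 <= xpar t).
    { destruct (Req_dec t 0) as [-> | Ht0]; [unfold xpar; lra |].
      apply Rlt_le, xpar_pos; lra. }
    split; [apply pow_le | apply pow_incr; split; [| apply xpar_le]]; lra. }
  assert (Hnum : 0 <= (1 - t)^2 * (1 + t + t^2) <= 3).
  { assert (0 <= (1 - t)^2 <= 1) by (split; nra). assert (1 <= 1 + t + t^2 <= 3) by nra.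
    split; nra. }
  assert (Hden : 27/64 <= (1 - t + t^2)^3).
  { replace (27/64) with ((3/4)^3) by field. apply pow_incr.
    pose proof (pow2_ge_0 (t - 1/2)). split; nra. }
  assert (Hfrac : 0 <= (1 - t)^2 * (1 + t + t^2) / (1 - t + t^2)^3 <= 8).
  { split.
    - apply Rmult_le_pos; [lra | apply Rlt_le, Rinv_0_lt_compat, pow_lt; lra].
    - apply Rle_div_l; [apply Rlt_gt, pow_lt; lra | nra]. }
  replace (integrand n t)
    with (81 * cV * xpar t ^ n * ((1 - t)^2 * (1 + t + t^2) / (1 - t + t^2)^3))
    by (unfold integrand; field; neq0s).
  unfold integrand_sup.
  rewrite Rabs_pos_eq by (apply Rmult_le_pos; [apply Rmult_le_pos |]; lra).
  replace (648 * cV * (27/4)^n) with (81 * cV * (27/4)^n * 8) by ring.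
  apply Rmult_le_compat; try lra.
  - apply Rmult_le_pos; lra.
  - apply Rmult_le_compat_l; lra.
Qed.

Definition moment_mu0 (n : nat) : R := Binomial.C (3 * n) n / INR (n + 1).

Definition rec_den (n : nat) : R := 2 * (2 * INR n + 1) * (INR n + 2).
Definition rec_num (n : nat) : R := 3 * (3 * INR n + 1) * (3 * INR n + 2).

Lemma rec_den_neq0 n : rec_den n <> 0.
Proof. unfold rec_den. pose proof (pos_INR n). neq0. Qed.

Lemma moment_mu0_0 : moment_mu0 0 = 1.
Proof. unfold moment_mu0, Binomial.C. simpl. field. Qed.

Lemma moment_mu0_succ n : moment_mu0 (S n) = / rec_den n * (rec_num n * moment_mu0 n).
Proof.
  unfold moment_mu0, Binomial.C.
  replace (3 * S n - S n)%nat with (S (S (2 * n))) by lia.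
  replace (3 * n - n)%nat with (2 * n)%nat by lia.
  replace (3 * S n)%nat with (S (S (S (3 * n)))) by lia.
  replace (S n + 1)%nat with (S (S n)) by lia.
  replace (n + 1)%nat with (S n) by lia.
  cbn [Factorial.fact].
  pose proof (pos_INR n). pose proof (INR_fact_neq_0 n).
  pose proof (INR_fact_neq_0 (2 * n)). pose proof (INR_fact_neq_0 (3 * n)).
  set (f1 := INR (Factorial.fact n)) in *.
  set (f2 := INR (Factorial.fact (2 * n))) in *.
  set (f3 := INR (Factorial.fact (3 * n))) in *.
  unfold rec_den, rec_num. rewrite !mult_INR, !S_INR, !mult_INR. fold f1 f2 f3. simpl INR.
  field; neq0s.
Qed.

Definition moment0_primitive (t : R) : R :=
  81 * cV * (t * (1 - t^2) / (3 * (1 - t + t^2)^2)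
             + 4 / (3 * sqrt 3) * atan ((2 * t - 1) / sqrt 3)).

Lemma is_derive_moment0_primitive t : is_derive moment0_primitive t (integrand 0 t).
Proof.
  pose proof (quadratic_pos t). pose proof sqrt3_pos. pose proof PI_RGT_0.
  unfold moment0_primitive, integrand. auto_derive; [neq0s |].
  simpl. unfold cV.
  replace (1 + (2 * t + - (1)) * / sqrt 3 * ((2 * t + - (1)) * / sqrt 3 * 1))
    with (4 * (1 - t + t^2) / 3).
  2: { field_simplify; try neq0s. rewrite pow2_sqrt by lra. field. }
  replace (4 / (3 * sqrt 3) * (2 * 1 * / sqrt 3 * / (4 * (1 - t + t ^ 2) / 3)))
    with (2 / (3 * (1 - t + t^2))).
  2: { field_simplify; try neq0s. rewrite pow2_sqrt by lra. field; neq0s. }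
  field; neq0s.
Qed.

Lemma moment0_primitive_increment : moment0_primitive 1 - moment0_primitive 0 = 1.
Proof.
  pose proof sqrt3_pos. pose proof PI_RGT_0. unfold moment0_primitive.
  replace ((2 * 1 - 1) / sqrt 3) with (tan (PI/6)) by (rewrite tan_PI6; field; lra).
  replace ((2 * 0 - 1) / sqrt 3) with (- tan (PI/6)) by (rewrite tan_PI6; field; lra).
  rewrite atan_opp, atan_tan by lra.
  unfold cV. field; neq0s.
Qed.

Definition recurrence_primitive (n : nat) (t : R) : R :=
  -27 * cV * xpar t ^ n * t / (1 + t^3)^2 *
  (18 * (1 + t) * (1 - t^3)
   + (27 * INR n - (4 * INR n + 2) * xpar t) * (1 - t) * (1 + t)^3).

Lemma is_derive_recurrence_primitive n t : 0 <= t ->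
  is_derive (recurrence_primitive n) t
    (integrand n t * (rec_den n * xpar t - rec_num n)).
Proof.
  intros Ht. pose proof (one_plus_cube_pos t Ht). pose proof (quadratic_pos t).
  unfold recurrence_primitive, integrand, rec_den, rec_num. auto_derive.
  { repeat split; try (exists (dxpar t); now apply is_derive_xpar). neq0s. }
  replace (Derive (fun x => xpar x) t) with (dxpar t)
    by (symmetry; now apply is_derive_unique, is_derive_xpar).
  destruct n as [|m].
  - simpl. unfold xpar, dxpar. field; neq0s.
  - rewrite S_INR. simpl pred. simpl pow. set (P := xpar t ^ m).
    unfold xpar, dxpar. field; neq0s.
Qed.

Lemma recurrence_primitive_0 n : recurrence_primitive n 0 = 0.
Proof. unfold recurrence_primitive, xpar. field; neq0s. Qed.

Lemma recurrence_primitive_1 n : recurrence_primitive n 1 = 0.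
Proof. unfold recurrence_primitive, xpar. field; neq0s. Qed.

Lemma continuous_recurrence_integrand n t : 0 <= t ->
  continuous (fun t => integrand n t * (rec_den n * xpar t - rec_num n)) t.
Proof.
  intros Ht. apply continuous_Rmult; [now apply continuous_integrand |].
  apply continuous_Rminus; [| apply continuous_const].
  apply continuous_Rmult; [apply continuous_const |].
  apply (ex_derive_continuous (V := R_NormedModule)).
  exists (dxpar t). now apply is_derive_xpar.
Qed.

Lemma is_RInt_integrand n : is_RInt (integrand n) 0 1 (moment_mu0 n).
Proof.
  induction n as [|n IH].
  - replace (moment_mu0 0) with (moment0_primitive 1 - moment0_primitive 0)
      by now rewrite moment0_primitive_increment, moment_mu0_0.
    apply (is_RInt_derive moment0_primitive).
    + intros t _. apply is_derive_moment0_primitive.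
    + intros t Ht. rewrite Rmin_left in Ht by lra. apply continuous_integrand. lra.
  - assert (Hrec : is_RInt (fun t => integrand n t * (rec_den n * xpar t - rec_num n)) 0 1
                     (recurrence_primitive n 1 - recurrence_primitive n 0)).
    { apply (is_RInt_derive (recurrence_primitive n));
        intros t Ht; rewrite Rmin_left in Ht by lra.
      - apply is_derive_recurrence_primitive. lra.
      - apply continuous_recurrence_integrand. lra. }
    rewrite recurrence_primitive_0, recurrence_primitive_1, Rminus_diag in Hrec.
    pose proof (is_RInt_scal _ _ _ (/ rec_den n) _
                  (is_RInt_plus _ _ _ _ _ _ Hrec (is_RInt_scal _ _ _ (rec_num n) _ IH))) as Hsum.
    replace (moment_mu0 (S n))
      with (scal (/ rec_den n) (plus 0 (scal (rec_num n) (moment_mu0 n)))).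
    2: { rewrite moment_mu0_succ. unfold scal, plus; simpl. unfold mult, plus; simpl. ring. }
    refine (is_RInt_ext _ _ _ _ _ _ Hsum).
    intros t _.
    unfold scal, plus; simpl. unfold mult; simpl. unfold integrand. simpl pow.
    pose proof (rec_den_neq0 n). pose proof (quadratic_pos t).
    field; neq0s.
Qed.

Lemma moment_tail_bound n a : 0 < a <= 1 ->
  Rabs (RInt (integrand n) a 1 - moment_mu0 n) <= a * integrand_sup n.
Proof.
  intros Ha.
  rewrite <- (is_RInt_unique _ _ _ _ (is_RInt_integrand n)).
  rewrite <- (RInt_Chasles (V := R_CompleteNormedModule) (integrand n) 0 a 1)
    by (apply ex_RInt_integrand; lra).
  unfold plus; simpl.
  replace (RInt (integrand n) a 1 - (RInt (integrand n) 0 a + RInt (integrand n) a 1))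
    with (- RInt (integrand n) 0 a) by ring.
  rewrite Rabs_Ropp. replace (a * integrand_sup n) with ((a - 0) * integrand_sup n) by ring.
  apply abs_RInt_le_const; [lra | apply ex_RInt_integrand; lra |].
  intros t Ht. apply integrand_bound. lra.
Qed.

Lemma moment_tail_small n eps : 0 < eps -> exists delta, 0 < delta /\
  forall a, 0 < a <= 1 -> xpar a < delta ->
    Rabs (RInt (integrand n) a 1 - moment_mu0 n) < eps.
Proof.
  intros Heps.
  assert (HM : 0 < integrand_sup n).
  { unfold integrand_sup. pose proof cV_pos. pose proof (pow_lt (27/4) n ltac:(lra)). nra. }
  set (e := eps / integrand_sup n).
  assert (He : 0 < e) by (apply Rdiv_lt_0_compat; lra).
  exists (27/4 * e^3). split; [pose proof (pow_lt e 3 He); lra |].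
  intros a Ha Hxa.
  assert (Hae : a < e).
  { destruct (Rlt_le_dec a e) as [| Hea]; auto.
    pose proof (pow_incr e a 3 (conj (Rlt_le _ _ He) Hea)). pose proof (xpar_ge a ltac:(lra)).
    lra. }
  eapply Rle_lt_trans; [now apply moment_tail_bound |].
  replace eps with (e * integrand_sup n) by (unfold e; field; lra).
  apply Rmult_lt_compat_r; lra.
Qed.

Theorem mainTheorem4 :
  (forall x, 0 < x < 27/4 -> 0 <= V x) /\
  (forall n : nat,
     improper_int_0 (fun x => x ^ n * V x) (27/4)
                    (Binomial.C (3 * n) n / INR (n + 1))).
Proof.
  split; [exact V_nonneg |].
  intros n. split.
  - intros x Hx. destruct (xpar_surj x Hx) as [a [Ha <-]].
    constructor. apply ex_RInt_Reals_0.
    eexists. now apply is_RInt_pow_mul_V.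
  - intros eps Heps.
    destruct (moment_tail_small n eps Heps) as [delta [Hdelta Htail]].
    exists (Rmin (27/4) delta). split; [apply Rmin_pos; lra |].
    intros x pr Hx.
    pose proof (Rmin_l (27/4) delta). pose proof (Rmin_r (27/4) delta).
    destruct (xpar_surj x) as [a [Ha <-]]; [lra |].
    rewrite <- (RInt_Reals _ _ _ pr), (is_RInt_unique _ _ _ _ (is_RInt_pow_mul_V n a Ha)).
    apply Htail; lra.
Qed.
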